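(* Let $Q\ge1$ and $\Omega_Q=\{(x,y)\in\mathbb R^2:\ x>0,\ y>0,\ xy\le Q\}$. Let $\mathcal B(x,y)=128Q^{3/2}(xy)^{1/2}-(xy)^2$ and, for $X_0\in\Omega_Q$, $\mathcal B_{X_0}(X)=\mathcal B(X)-\mathcal B'(X_0)(X-X_0)$, where $\mathcal B'(X_0)$ is the gradient of $\mathcal B$ at $X_0$. Then (1) $0\le\mathcal B(X)\le 128Q^2$ for all $X\in\Omega_Q$; (2) for all $X_0=(x_0,y_0)$, $X=(x,y)$ in $\Omega_Q$, $$\mathcal B_{X_0}(X_0)-\mathcal B_{X_0}(X)\ge c\,|x-x_0|^2\,y\,y_0,$$ where $c$ is an absolute constant. *)

From Stdlib Require Import Reals.
From Coquelicot Require Import Coquelicot.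
Open Scope R_scope.

Definition OmegaQ (Q x y : R) : Prop := 0 < x /\ 0 < y /\ x * y <= Q.

Definition Bfun (Q x y : R) : R :=
  128 * Rpower Q (3 / 2) * sqrt (x * y) - (x * y) ^ 2.

Definition dBx (Q x0 y0 : R) : R := Derive (fun x => Bfun Q x y0) x0.
Definition dBy (Q x0 y0 : R) : R := Derive (fun y => Bfun Q x0 y) y0.

Definition BX0 (Q x0 y0 x y : R) : R :=
  Bfun Q x y - (dBx Q x0 y0 * (x - x0) + dBy Q x0 y0 * (y - y0)).

(** Substituting [Q = S^2], [x = X^2], [y = Y^2] turns [B] into the
    polynomial [128 S^3 XY - (XY)^4], so (1) is a bound on a quartic in
    [XY <= S].  For (2), [B] is homogeneous under [(X, Y, S) -> t (X, Y, S)],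
    so after dividing by [(X0 Y0)^4] the gap becomes a function of
    [a = X/X0], [b = Y/Y0] and [M = (S/(X0 Y0))^3 >= max (1, (ab)^3)]:
    [64 M (a - b)^2 + (ab)^4 + 3 - 2a^2 - 2b^2].  Writing
    [(a^2 - 1) b = ab (a - b) + b (ab - 1)], the concavity defect
    [64 M (a - b)^2] absorbs the first term and [(ab - 1)^2 ((ab)^2 + 2ab + 3)]
    the second, which gives the constant [c = 1/4]. *)

From Stdlib Require Import Reals Lra Psatz.
From Coquelicot Require Import Coquelicot.
Open Scope R_scope.

Lemma pos_square x : 0 < x -> exists X, 0 < X /\ x = X ^ 2.
Proof.
intros hx. exists (sqrt x). split.
- now apply sqrt_lt_R0.
- rewrite pow2_sqrt; lra.
Qed.

Lemma ge1_square Q : 1 <= Q -> exists S, 1 <= S /\ Q = S ^ 2.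
Proof.
intros hQ. destruct (pos_square Q) as [S [hS ->]]; [lra|].
exists S. split; [nra | reflexivity].
Qed.

Lemma OmegaQ_square S x y : 0 < S -> OmegaQ (S ^ 2) x y ->
  exists X Y, 0 < X /\ 0 < Y /\ X * Y <= S /\ x = X ^ 2 /\ y = Y ^ 2.
Proof.
intros hS [hx [hy hxy]].
destruct (pos_square x hx) as [X [hX ->]].
destruct (pos_square y hy) as [Y [hY ->]].
exists X, Y. repeat split; try easy. nra.
Qed.

Lemma Rpower_square_3_2 S : 0 < S -> Rpower (S ^ 2) (3 / 2) = S ^ 3.
Proof.
intros hS. rewrite <- Rpower_pow by lra.
rewrite Rpower_mult, <- Rpower_pow by lra.
f_equal. simpl. field.
Qed.

Lemma sqrt_square_mul X Y : 0 <= X -> 0 <= Y -> sqrt (X ^ 2 * Y ^ 2) = X * Y.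
Proof. intros hX hY. rewrite <- Rpow_mult_distr. apply sqrt_pow2. nra. Qed.

Lemma dBx_val Q x0 y0 : 0 < x0 -> 0 < y0 ->
  dBx Q x0 y0 = 128 * Rpower Q (3 / 2) * (y0 / (2 * sqrt (x0 * y0))) - 2 * (x0 * y0) * y0.
Proof.
intros hx hy. unfold dBx, Bfun. apply is_derive_unique.
auto_derive; [nra|]. simpl. field. apply Rgt_not_eq, sqrt_lt_R0. nra.
Qed.

Lemma dBy_val Q x0 y0 : 0 < x0 -> 0 < y0 ->
  dBy Q x0 y0 = 128 * Rpower Q (3 / 2) * (x0 / (2 * sqrt (x0 * y0))) - 2 * (x0 * y0) * x0.
Proof.
intros hx hy. unfold dBy, Bfun. apply is_derive_unique.
auto_derive; [nra|]. simpl. field. apply Rgt_not_eq, sqrt_lt_R0. nra.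
Qed.

Lemma Bfun_square S X Y : 0 < S -> 0 <= X -> 0 <= Y ->
  Bfun (S ^ 2) (X ^ 2) (Y ^ 2) = 128 * S ^ 3 * (X * Y) - (X * Y) ^ 4.
Proof.
intros hS hX hY. unfold Bfun.
rewrite Rpower_square_3_2, sqrt_square_mul by easy. ring.
Qed.

Lemma BX0_gap_square S X0 Y0 X Y :
  0 < S -> 0 < X0 -> 0 < Y0 -> 0 < X -> 0 < Y ->
  BX0 (S ^ 2) (X0 ^ 2) (Y0 ^ 2) (X0 ^ 2) (Y0 ^ 2)
    - BX0 (S ^ 2) (X0 ^ 2) (Y0 ^ 2) (X ^ 2) (Y ^ 2)
  = (X0 * Y0) ^ 4 * (64 * (S / (X0 * Y0)) ^ 3 * (X / X0 - Y / Y0) ^ 2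
      + ((X / X0 * (Y / Y0)) ^ 4 + 3 - 2 * (X / X0) ^ 2 - 2 * (Y / Y0) ^ 2)).
Proof.
intros hS hX0 hY0 hX hY. unfold BX0.
rewrite dBx_val, dBy_val by nra.
rewrite !Bfun_square, Rpower_square_3_2, sqrt_square_mul by lra.
field. lra.
Qed.

Lemma quartic_bounds S s : 0 <= s <= S ->
  0 <= 128 * S ^ 3 * s - s ^ 4 <= 128 * S ^ 4.
Proof.
intros hs.
assert (s ^ 3 <= S ^ 3) by (apply pow_incr; lra).
assert (0 <= S ^ 3 * s) by (apply Rmult_le_pos; [apply pow_le|]; lra).
assert (s ^ 3 * s <= S ^ 3 * s) by (apply Rmult_le_compat_r; lra).
assert (S ^ 3 * s <= S ^ 3 * S) by (apply Rmult_le_compat_l; [apply pow_le|]; lra).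
split; nra.
Qed.

Lemma square_le_of_cube_le g M : 0 < g -> 1 <= M -> g ^ 3 <= M -> g ^ 2 <= M.
Proof.
intros hg hM hgM. destruct (Rle_dec g 1).
- assert (g ^ 2 <= 1) by nra. lra.
- assert (g ^ 2 * 1 <= g ^ 2 * g) by (apply Rmult_le_compat_l; [apply pow_le|]; lra).
  replace (g ^ 3) with (g ^ 2 * g) in hgM by ring. lra.
Qed.

Lemma sqr_pred_le_of_cube_le g M : 0 < g -> 1 <= M -> g ^ 3 <= M -> (g - 1) ^ 2 <= M.
Proof.
intros hg hM hgM. pose proof (square_le_of_cube_le g M hg hM hgM).
destruct (Rle_dec g 1); nra.
Qed.

Lemma cross_term_le a b M : 0 < a -> 0 < b -> 1 <= M -> (a * b) ^ 3 <= M ->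
  b ^ 2 * (a * b - 1) ^ 2
    <= 4 * M * (a - b) ^ 2 + 2 * (a * b - 1) ^ 2 * ((a * b) ^ 2 + 2 * (a * b) + 3).
Proof.
intros ha hb hM hgM.
pose proof (sqr_pred_le_of_cube_le (a * b) M ltac:(nra) hM hgM).
assert (0 <= (a * b - 1) ^ 2) by apply pow2_ge_0.
assert (0 <= (a - b) ^ 2) by apply pow2_ge_0.
destruct (Rle_dec (2 * a) b).
- assert (b ^ 2 <= 4 * (a - b) ^ 2) by nra. nra.
- assert (b ^ 2 <= 2 * (a * b)) by nra. nra.
Qed.

Lemma normalized_gap_ge a b M : 0 < a -> 0 < b -> 1 <= M -> (a * b) ^ 3 <= M ->
  64 * M * (a - b) ^ 2 + ((a * b) ^ 4 + 3 - 2 * a ^ 2 - 2 * b ^ 2)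
    >= / 4 * ((a ^ 2 - 1) * b) ^ 2.
Proof.
intros ha hb hM hgM.
pose proof (square_le_of_cube_le (a * b) M ltac:(nra) hM hgM).
pose proof (cross_term_le a b M ha hb hM hgM).
replace ((a ^ 2 - 1) * b) with (a * b * (a - b) + b * (a * b - 1)) by ring.
replace ((a * b) ^ 4 + 3 - 2 * a ^ 2 - 2 * b ^ 2)
  with ((a * b - 1) ^ 2 * ((a * b) ^ 2 + 2 * (a * b) + 3) - 2 * (a - b) ^ 2) by ring.
assert (0 <= (a - b) ^ 2) by apply pow2_ge_0.
assert (0 <= (a * b - 1) ^ 2 * ((a * b) ^ 2 + 2 * (a * b) + 3))
  by (apply Rmult_le_pos; [apply pow2_ge_0 | nra]).
assert ((a * b) ^ 2 * (a - b) ^ 2 <= M * (a - b) ^ 2) by (apply Rmult_le_compat_r; lra).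
pose proof (pow2_ge_0 (a * b * (a - b) - b * (a * b - 1))).
nra.
Qed.

Lemma ratio_cube_bounds P P' S : 0 < P <= S -> 0 < P' <= S ->
  1 <= (S / P) ^ 3 /\ (P' / P) ^ 3 <= (S / P) ^ 3.
Proof.
intros hP hP'. split.
- apply pow_R1_Rle. apply Rle_div_r; lra.
- apply pow_incr. split.
  + apply Rlt_le, Rdiv_lt_0_compat; lra.
  + apply Rmult_le_compat_r; [apply Rlt_le, Rinv_0_lt_compat|]; lra.
Qed.

Theorem lemma5p3 :
  (forall Q x y : R, 1 <= Q -> OmegaQ Q x y ->
     0 <= Bfun Q x y /\ Bfun Q x y <= 128 * Q ^ 2) /\
  (exists c : R, 0 < c /\
     forall Q x0 y0 x y : R, 1 <= Q -> OmegaQ Q x0 y0 -> OmegaQ Q x y ->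
       BX0 Q x0 y0 x0 y0 - BX0 Q x0 y0 x y >= c * (Rabs (x - x0)) ^ 2 * y * y0).
Proof.
split.
- intros Q x y hQ hxy.
  destruct (ge1_square Q hQ) as [S [hS ->]].
  destruct (OmegaQ_square S x y ltac:(lra) hxy) as [X [Y [hX [hY [hXY [-> ->]]]]]].
  rewrite Bfun_square by lra.
  replace ((S ^ 2) ^ 2) with (S ^ 4) by ring.
  apply quartic_bounds. nra.
- exists (/ 4). split; [lra|].
  intros Q x0 y0 x y hQ h0 h.
  destruct (ge1_square Q hQ) as [S [hS ->]].
  destruct (OmegaQ_square S x0 y0 ltac:(lra) h0) as [X0 [Y0 [hX0 [hY0 [hP0 [-> ->]]]]]].
  destruct (OmegaQ_square S x y ltac:(lra) h) as [X [Y [hX [hY [hP [-> ->]]]]]].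
  rewrite BX0_gap_square, pow2_abs by lra.
  replace (/ 4 * (X ^ 2 - X0 ^ 2) ^ 2 * Y ^ 2 * Y0 ^ 2)
    with ((X0 * Y0) ^ 4 * (/ 4 * (((X / X0) ^ 2 - 1) * (Y / Y0)) ^ 2)) by (field; lra).
  apply Rmult_ge_compat_l; [apply Rle_ge, pow_le; nra|].
  destruct (ratio_cube_bounds (X0 * Y0) (X * Y) S ltac:(nra) ltac:(nra)) as [hM hg].
  apply normalized_gap_ge; try (apply Rdiv_lt_0_compat; lra); [easy|].
  replace (X / X0 * (Y / Y0)) with (X * Y / (X0 * Y0)) by (field; lra).
  exact hg.
Qed.
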